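(* Consider an $a\times b$ grid of unit cells with $\ell = a+b$ a power of two, and any monotone path $\gamma$ through the grid. Then the region under $\gamma$ can be decomposed into disjoint axis-parallel rectangles (each a union of grid cells) such that the sum of the perimeters of these rectangles is $O(\ell\log \ell)$.
   Context: A monotone path is a path along grid lines from the bottom-left corner to the top-right corner of the grid that only moves up or right. The region under $\gamma$ is the set of grid cells lying below (equivalently, to the lower right of) $\gamma$. *)

From mathcomp Require Import all_boot.
Set Implicit Arguments. Unset Strict Implicit. Unset Printing Implicit Defensive.

(* Grid: cells (i, j) with 0 <= i < a (column, x-coordinate) and
   0 <= j < b (row, y-coordinate).  Cell (i,j) is [i,i+1] x [j,j+1].
   A monotone path from (0,0) to (a,b) is a word of steps:
   true = one unit step right, false = one unit step up. *)
Definition monotone_path (a b : nat) (p : seq bool) : Prop :=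
  count id p = a /\ count negb p = b.

Fixpoint heights_from (p : seq bool) (y : nat) : seq nat :=
  match p with
  | [::] => [::]
  | true :: p' => y :: heights_from p' y
  | false :: p' => heights_from p' y.+1
  end.

(* height of the path above column i (the horizontal edge of the path
   spanning x in [i, i+1]) *)
Definition path_height (p : seq bool) (i : nat) : nat :=
  nth 0 (heights_from p 0) i.

Definition under_path (a b : nat) (p : seq bool) (c : nat * nat) : bool :=
  [&& c.1 < a, c.2 < b & c.2 < path_height p c.1].

(* axis-parallel grid rectangle [x0,x1) x [y0,y1) of cells,
   encoded as ((x0, x1), (y0, y1)) *)
Definition rect := ((nat * nat) * (nat * nat))%type.

Definition rect_nonempty (r : rect) : bool :=
  (r.1.1 < r.1.2) && (r.2.1 < r.2.2).

Definition in_rect (r : rect) (c : nat * nat) : bool :=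
  [&& r.1.1 <= c.1, c.1 < r.1.2, r.2.1 <= c.2 & c.2 < r.2.2].

Definition perimeter (r : rect) : nat :=
  2 * ((r.1.2 - r.1.1) + (r.2.2 - r.2.1)).

Definition rects_disjoint (r s : rect) : Prop :=
  forall c, ~~ (in_rect r c && in_rect s c).

Definition dflt_rect : rect := ((0, 0), (0, 0)).

Definition rect_decomposition (a b : nat) (p : seq bool) (rs : seq rect) : Prop :=
  [/\ all rect_nonempty rs,
      (forall i j, i < j < size rs ->
         rects_disjoint (nth dflt_rect rs i) (nth dflt_rect rs j)) &
      forall c, under_path a b p c = has (fun r => in_rect r c) rs].

(* Reading the path from left to right, the height of its horizontal edge
   above column [i] is nondecreasing in [i]; extending it by [b] beyond the
   last column gives a nondecreasing function [column_height] on all of nat,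
   and the region under the path is { (u, v) | u < a, v < column_height u }.

   Such a "staircase" region is cut dyadically.  Over a block of columns
   [x0, x0 + 2^d) whose cells below height [y0] are already covered, take
   the rectangle spanning the right half of the block from [y0] up to the
   height at the middle column [m]; what remains is the left half above
   [y0] and the right half above [h m], treated recursively.  Every cell is
   covered exactly once ([dyadic_rects_count]), and since the heights
   telescope, each of the [d + 1] levels of the recursion contributes
   perimeter at most twice the half-perimeter of the block
   ([dyadic_rects_perimeter]).  With [a + b = 2^k] this gives total
   perimeter [O(2^k * k)].  Finally, a list of nonempty rectangles covering
   every cell of the region exactly once, and nothing else, is a
   decomposition ([exact_cover_decomposition]); empty rectangles produced by
   the recursion are simply filtered out. *)

From mathcomp Require Import all_boot zify.

Lemma size_heights_from p y : size (heights_from p y) = count id p.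
Proof. by elim: p y => [|[] p IH] y //=; rewrite IH. Qed.

Lemma heights_from_path p x y : x <= y -> path leq x (heights_from p y).
Proof.
elim: p x y => [|[] p IH] x y //= xy; first by rewrite xy IH.
by apply: IH; apply: leqW.
Qed.

Lemma heights_from_bounded p y :
  all (fun z => z <= y + count negb p) (heights_from p y).
Proof.
elim: p y => [|[] p IH] y //=; first by rewrite leq_addr add0n IH.
by rewrite add1n addnS -addSn IH.
Qed.

Section ColumnHeight.
Variables (a b : nat) (p : seq bool).
Hypothesis p_monotone : monotone_path a b p.

(* Height of the region under [p] above column [i], extended by the full
   height [b] to the right of the grid so that it is monotone on all of nat. *)
Definition column_height (i : nat) : nat := if i < a then path_height p i else b.

Lemma path_height_le i : i < a -> path_height p i <= b.
Proof.
case: p_monotone => a_def b_def ia; rewrite /path_height.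
have /allP := heights_from_bounded p 0; rewrite add0n b_def; apply.
by rewrite mem_nth // size_heights_from a_def.
Qed.

Lemma column_height_mono : {homo column_height : i j / i <= j}.
Proof.
move=> i j ij; rewrite /column_height.
case: (ltnP j a) => [ja|aj]; last by case: ifP => // /path_height_le.
have sorted_h : sorted leq (heights_from p 0) :=
  path_sorted (@heights_from_path p 0 0 (leqnn 0)).
have in_range n : n < a -> n \in [pred n | n < size (heights_from p 0)].
  by rewrite inE size_heights_from; case: p_monotone => -> _.
have ia : i < a := leq_ltn_trans ij ja.
rewrite ia /path_height.
exact: (sorted_leq_nth leq_trans leqnn 0 sorted_h i j (in_range _ ia) (in_range _ ja) ij).
Qed.

Lemma under_pathE u v :
  under_path a b p (u, v) = (u < a) && (v < column_height u).
Proof.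
rewrite /under_path /column_height /=; case: (ltnP u a) => //= ua.
case: (ltnP v (path_height p u)) => [vh|]; last by rewrite andbF.
by rewrite (leq_trans vh (path_height_le _ ua)).
Qed.

End ColumnHeight.

Arguments column_height_mono {a b p}.
Arguments under_pathE {a b p}.

Section Dyadic.
Variables (a : nat) (h : nat -> nat).
Hypothesis h_mono : {homo h : i j / i <= j}.

(* [dyadic_rects d x0 y0] covers the cells of columns [x0, x0 + 2^d) (cut at
   [a]) lying between height [y0] and the staircase; [m] is the middle column. *)
Fixpoint dyadic_rects (d x0 y0 : nat) : seq rect :=
  match d with
  | 0 => [:: ((x0, minn x0.+1 a), (y0, h x0))]
  | d'.+1 =>
      let m := x0 + 2 ^ d' in
      ((m, minn (m + 2 ^ d') a), (y0, h m))
        :: dyadic_rects d' x0 y0 ++ dyadic_rects d' m (h m)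
  end.

Lemma dyadic_rects_count d x0 y0 u v :
  y0 <= h x0 ->
  count (in_rect^~ (u, v)) (dyadic_rects d x0 y0) =
  [&& x0 <= u, u < x0 + 2 ^ d, u < a, y0 <= v & v < h u].
Proof.
elim: d x0 y0 => [|d IH] x0 y0 y0_le /=.
  rewrite /in_rect /= ltn_min addn1.
  case: (leqP x0 u) => //= xu; case: (ltnP u x0.+1) => //= ux.
  have -> : u = x0 by lia.
  by rewrite addn0.
set m := x0 + 2 ^ d.
have hm_ge : y0 <= h m := leq_trans y0_le (h_mono _ _ (leq_addr _ _)).
have -> : x0 + 2 ^ d.+1 = m + 2 ^ d by rewrite expnS mul2n -addnn addnA.
rewrite count_cat !IH // /in_rect /= ltn_min.
case: (ltnP u m) => [um|mu]; first by rewrite (ltn_addr _ um) /= add0n addn0.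
have := h_mono _ _ mu; have -> : x0 <= u := leq_trans (leq_addr _ _) mu.
rewrite /= add0n; lia.
Qed.

(* The rectangles of level [d] over a block of width [2^d] have total
   perimeter at most [2(d+1)] times the block's half-perimeter: each of the
   [d+1] levels of the recursion contributes at most one half-perimeter. *)
Lemma dyadic_rects_perimeter d x0 y0 :
  y0 <= h x0 ->
  \sum_(r <- dyadic_rects d x0 y0) perimeter r <=
  2 * d.+1 * (2 ^ d + h (x0 + 2 ^ d) - y0).
Proof.
elim: d x0 y0 => [|d IH] x0 y0 y0_le /=.
  rewrite big_seq1 /perimeter /= expn0 addn1.
  have := h_mono _ _ (leqnSn x0); have := geq_minl x0.+1 a; lia.
set m := x0 + 2 ^ d.
have hm_ge : y0 <= h m := leq_trans y0_le (h_mono _ _ (leq_addr _ _)).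
have -> : x0 + 2 ^ d.+1 = m + 2 ^ d by rewrite expnS mul2n -addnn addnA.
have top : perimeter (m, minn (m + 2 ^ d) a, (y0, h m)) <= 2 * (2 ^ d + h m - y0).
  by rewrite /perimeter /=; have := geq_minl (m + 2 ^ d) a; lia.
have left := IH x0 y0 y0_le; have right := IH m (h m) (leqnn _).
have hm_le : h m <= h (m + 2 ^ d) := h_mono _ _ (leq_addr _ _).
rewrite big_cons big_cat /= expnS.
(* Abstract the sums and heights: what is left is a polynomial inequality. *)
move: top left right hm_ge hm_le; rewrite -/m.
move: (perimeter _) (\sum_(r <- _ _ x0 _) _) (\sum_(r <- _ _ m _) _) => P L R.
move: (h m) (h (m + 2 ^ d)) (2 ^ d) => hm ht w.
nia.
Qed.
End Dyadic.

Arguments dyadic_rects_count {a h}.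
Arguments dyadic_rects_perimeter {a h}.

Lemma in_rect_nonempty r c : in_rect r c -> rect_nonempty r.
Proof.
case/and4P=> x0u ux1 y0v vy1.
by rewrite /rect_nonempty (leq_ltn_trans x0u ux1) (leq_ltn_trans y0v vy1).
Qed.

Lemma count_in_rect_nonempty s c :
  count (in_rect^~ c) (filter rect_nonempty s) = count (in_rect^~ c) s.
Proof.
by rewrite count_filter; apply: eq_count => r /=; apply/andb_idr/in_rect_nonempty.
Qed.

Lemma count_gt1_nth {T : Type} (x0 : T) (Q : pred T) {s i j} :
  i < j < size s -> Q (nth x0 s i) -> Q (nth x0 s j) -> 1 < count Q s.
Proof.
elim: s i j => [|x s IH] [|i] [|j] //=; first by rewrite andbF.
  rewrite ltnS => js -> Qj; rewrite add1n ltnS -has_count.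
  by apply/(has_nthP x0); exists j.
rewrite !ltnS => ijs Qi Qj; apply: leq_trans (leq_addl _ _); exact: IH ijs Qi Qj.
Qed.

Lemma exact_cover_decomposition a b p rs :
  all rect_nonempty rs ->
  (forall c, count (in_rect^~ c) rs = under_path a b p c) ->
  rect_decomposition a b p rs.
Proof.
move=> nonempty cover; split=> // [i j ij c|c]; last first.
  by rewrite has_count cover; case: under_path.
apply/negP => /andP[ci cj].
have := count_gt1_nth dflt_rect (in_rect^~ c) ij ci cj.
by rewrite cover; case: under_path.
Qed.

Lemma sum_filter_le {T : Type} (P : pred T) (F : T -> nat) s :
  \sum_(r <- filter P s) F r <= \sum_(r <- s) F r.
Proof. by rewrite big_filter big_mkcond /=; apply: leq_sum => r _; case: (P r). Qed.

(* Main theorem, with constant 8: for [a + b = 2^k.+1] the dyadic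
   decomposition of depth [k.+1] has perimeter at most
   [2 (k+2) (2^k.+1 + b) <= 8 * 2^k.+1 * k.+1]; for [k = 0] one side of
   the grid is empty, hence so is the region. *)
Theorem mainTheorem4 :
  exists C : nat,
    forall (k a b : nat) (p : seq bool),
      a + b = 2 ^ k ->
      monotone_path a b p ->
      exists rs : seq rect,
        rect_decomposition a b p rs /\
        \sum_(r <- rs) perimeter r <= C * (2 ^ k * k).
Proof.
exists 8 => [[|k]] a b p ab p_monotone.
  exists [::]; split; last by rewrite big_nil.
  apply: exact_cover_decomposition => // -[u v].
  by rewrite /under_path /=; rewrite expn0 in ab; lia.
set h := column_height a b p.
have h_mono : {homo h : i j / i <= j} := column_height_mono p_monotone.
exists (filter rect_nonempty (dyadic_rects a h k.+1 0 0)); split.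
  apply: exact_cover_decomposition => [|[u v]]; first exact: filter_all.
  rewrite count_in_rect_nonempty (dyadic_rects_count h_mono) //.
  rewrite (under_pathE p_monotone) /= add0n.
  case: (ltnP u a) => ua /=; last by rewrite andbF.
  by rewrite -ab ltn_addr.
apply: leq_trans (sum_filter_le _ _ _) _.
apply: leq_trans (dyadic_rects_perimeter h_mono k.+1 0 0 (leq0n _)) _.
rewrite add0n subn0 /h /column_height ltnNge -ab leq_addr /=.
have : b <= 2 ^ k.+1 by rewrite -ab leq_addl.
move: (2 ^ k.+1) => w bw; nia.
Qed.
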